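(* Let $M$ be a graded $R$-module. The following are equivalent: (1) $qp.Spec_g(M)$ with the quasi-Zariski topology is a $T_0$-space. (2) For all $Q,P\in qp.Spec_g(M)$, if $qp\text{-}V_M^g(Q)=qp\text{-}V_M^g(P)$ then $Q=P$. (3) $|qp.Spec_g^p(M)|\le 1$ for every $p\in Spec_g(R)$. (4) The natural map $\varphi$ is injective.
   Context: $R=\bigoplus_{g\in G}R_g$ is a graded commutative ring with identity graded by a group $G$, $h(R)=\bigcup_g R_g$; $M$ is a graded $R$-module, $h(M)$ its homogeneous elements. $Gr(I)$ is the graded radical of a graded ideal $I$. $Spec_g(R)$: graded prime ideals. $(K:_RM)=\{r: rM\subseteq K\}$. Graded prime submodule: proper graded $P$ with $rm\in P$ ($r\in h(R), m\in h(M)$) implying $m\in P$ or $r\in(P:_RM)$. $Gr_M(K)$: intersection of graded prime submodules containing $K$ ($M$ if none). Graded primeful property of $K$: for each graded prime $p\supseteq(K:_RM)$ there is a graded prime submodule $P\supseteq K$ with $(P:_RM)=p$. Graded quasi-primary submodule: proper graded $Q$ with $rm\in Q$ ($r\in h(R),m\in h(M)$) implying $r\in Gr((Q:_RM))$ or $m\in Gr_M(Q)$. $qp.Spec_g(M)$: graded quasi-primary submodules with the graded primeful property; $qp.Spec_g^p(M)=\{Q\in qp.Spec_g(M): Gr((Q:_RM))=p\}$. $qp\text{-}V_M^g(K)=\{Q\in qp.Spec_g(M): Gr((Q:_RM))\supseteq Gr((K:_RM))\}$; the quasi-Zariski topology has closed sets exactly these. $\overline R=R/\mathrm{Ann}(M)$.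 For $Q\in qp.Spec_g(M)$, $(Gr_M(Q):_RM)=Gr((Q:_RM))$ is a graded prime ideal of $R$ containing $\mathrm{Ann}(M)$; the natural map $\varphi:qp.Spec_g(M)\to Spec_g(\overline R)$ is $\varphi(Q)=(Gr_M(Q):_RM)/\mathrm{Ann}(M)$. *)

From HB Require Import structures.
From mathcomp Require Import all_boot all_order all_algebra.
Set Implicit Arguments.
Unset Strict Implicit.
Unset Printing Implicit Defensive.
Import GRing.Theory.
Local Open Scope ring_scope.

(* Graded rings / graded modules over a group G (a groupType: any group,
   possibly infinite and non-abelian).  Submodules, ideals and subsets are
   represented as Prop-valued predicates. *)

Section Graded.
Variables (G : groupType) (R : comPzRingType) (M : lmodType R).
(* RG g = the homogeneous component R_g, MG g = M_g *)
Variables (RG : G -> R -> Prop) (MG : G -> M -> Prop).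

Definition graded_ring : Prop :=
  [/\ (forall g, RG g 0 /\ (forall x y, RG g x -> RG g y -> RG g (x - y))),
      (forall g h x y, RG g x -> RG h y -> RG (g * h)%g (x * y)),
      (forall r : R, exists (s : seq G) (f : G -> R),
          [/\ uniq s, forall g, RG g (f g) & r = \sum_(g <- s) f g]) &
      (forall (s : seq G) (f : G -> R), uniq s -> (forall g, RG g (f g)) ->
          \sum_(g <- s) f g = 0 -> forall g, g \in s -> f g = 0)].

Definition graded_module : Prop :=
  [/\ (forall g, MG g 0 /\ (forall x y, MG g x -> MG g y -> MG g (x - y))),
      (forall g h (r : R) (m : M), RG g r -> MG h m -> MG (g * h)%g (r *: m)),
      (forall m : M, exists (s : seq G) (f : G -> M),
          [/\ uniq s, forall g, MG g (f g) & m = \sum_(g <- s) f g]) &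
      (forall (s : seq G) (f : G -> M), uniq s -> (forall g, MG g (f g)) ->
          \sum_(g <- s) f g = 0 -> forall g, g \in s -> f g = 0)].

Definition homR (r : R) : Prop := exists g, RG g r.
Definition homM (m : M) : Prop := exists g, MG g m.

Definition subset_of {T : Type} (A B : T -> Prop) : Prop := forall x, A x -> B x.

Definition ideal (I : R -> Prop) : Prop :=
  [/\ I 0, (forall x y, I x -> I y -> I (x + y)) & (forall r x, I x -> I (r * x))].
Definition submodule (N : M -> Prop) : Prop :=
  [/\ N 0, (forall x y, N x -> N y -> N (x + y)) & (forall (r : R) x, N x -> N (r *: x))].

Definition graded_ideal (I : R -> Prop) : Prop :=
  ideal I /\ forall r, I r -> exists s : seq R,
    (forall x, x \in s -> homR x /\ I x) /\ r = \sum_(x <- s) x.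
Definition graded_submodule (N : M -> Prop) : Prop :=
  submodule N /\ forall n, N n -> exists s : seq M,
    (forall x, x \in s -> homM x /\ N x) /\ n = \sum_(x <- s) x.

Definition colon (K : M -> Prop) : R -> Prop := fun r => forall m : M, K (r *: m).
Definition Ann : R -> Prop := colon (fun m => m = 0).

Definition graded_prime_ideal (p : R -> Prop) : Prop :=
  [/\ graded_ideal p, ~ (forall r, p r) &
      forall a b, homR a -> homR b -> p (a * b) -> p a \/ p b].

Definition Gr (I : R -> Prop) : R -> Prop := fun r =>
  exists (s : seq G) (f : G -> R),
    [/\ uniq s, (forall g, RG g (f g)), r = \sum_(g <- s) f g &
        forall g, g \in s -> exists n : nat, (0 < n)%N /\ I (f g ^+ n)].

Definition graded_prime_submodule (P : M -> Prop) : Prop :=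
  [/\ graded_submodule P, ~ (forall m, P m) &
      forall r m, homR r -> homM m -> P (r *: m) -> P m \/ colon P r].

Definition GrM (K : M -> Prop) : M -> Prop := fun m =>
  forall P, graded_prime_submodule P -> subset_of K P -> P m.

Definition primeful (K : M -> Prop) : Prop :=
  forall p, graded_prime_ideal p -> subset_of (colon K) p ->
    exists P, [/\ graded_prime_submodule P, subset_of K P & colon P = p].

Definition quasi_primary (Q : M -> Prop) : Prop :=
  [/\ graded_submodule Q, ~ (forall m, Q m) &
      forall r m, homR r -> homM m -> Q (r *: m) -> Gr (colon Q) r \/ GrM Q m].

Definition qpSpec (Q : M -> Prop) : Prop := quasi_primary Q /\ primeful Q.

Definition qpSpec_p (p : R -> Prop) (Q : M -> Prop) : Prop :=
  qpSpec Q /\ Gr (colon Q) = p.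

Definition qpV (K : M -> Prop) : (M -> Prop) -> Prop := fun Q =>
  qpSpec Q /\ subset_of (Gr (colon K)) (Gr (colon Q)).

Definition qz_open (U : (M -> Prop) -> Prop) : Prop :=
  exists K, graded_submodule K /\ U = (fun Q => qpSpec Q /\ ~ qpV K Q).

Definition qz_T0 : Prop :=
  forall Q P, qpSpec Q -> qpSpec P -> Q <> P ->
    exists U, qz_open U /\ ((U Q /\ ~ U P) \/ (U P /\ ~ U Q)).

(* natural map phi : qp.Spec_g(M) -> Spec_g(R / Ann(M)),
   Q |-> (Gr_M(Q) :_R M) / Ann(M), where R/Ann(M) is presented by a
   surjective ring morphism pi with kernel Ann(M). *)
Definition phi (Rbar : comPzRingType) (pi : R -> Rbar) (Q : M -> Prop) : Rbar -> Prop :=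
  fun y => exists r, colon (GrM Q) r /\ pi r = y.

End Graded.

(* For Q in qp.Spec_g(M) the graded radical Gr((Q :_R M)) equals (Gr_M(Q) :_R M).
   The inclusion "<=" holds for every Q, since (P :_R M) contains every
   homogeneous element having a power in it when P is a graded prime submodule.
   For ">=", a homogeneous component of r in (Gr_M(Q) :_R M) with no power in
   (Q :_R M) is avoided by a graded prime ideal p over (Q :_R M) (Zorn), and the
   primeful property turns p into a graded prime submodule P over Q with
   (P :_R M) = p, which contains the components of r: a contradiction.
   Hence Gr((Q :_R M)) is a graded prime ideal, and qp-V(Q) (the closure of Q),
   the stratum qp.Spec_g^p(M) containing Q and phi(Q) all depend on Q exactly
   through Gr((Q :_R M)); each of the four conditions says that this
   assignment is injective on qp.Spec_g(M). *)

From HB Require Import structures.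
From mathcomp Require Import all_boot all_order all_algebra.
From mathcomp Require Import zify boolp classical_sets.
Import GRing.Theory.
Local Open Scope ring_scope.
Local Open Scope classical_set_scope.
Set Implicit Arguments.
Unset Strict Implicit.

Section Ideal.
Variables (R : comPzRingType) (I : R -> Prop).
Hypothesis I_ideal : ideal I.

Lemma ideal_mulr x r : I x -> I (x * r).
Proof. by case: I_ideal => _ _ IM Ix; rewrite mulrC; apply: IM. Qed.

Lemma ideal_sum (T : eqType) (s : seq T) (F : T -> R) :
  (forall i, i \in s -> I (F i)) -> I (\sum_(i <- s) F i).
Proof. by case: I_ideal => I0 ID _ IF; rewrite big_seq; apply: big_ind. Qed.

Lemma ideal_exprD x y m n :
  I (x ^+ m) -> I (y ^+ n) -> I ((x + y) ^+ (m + n)).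
Proof.
case: I_ideal => _ _ IM Ix Iy; rewrite exprDn; apply: ideal_sum => i _.
rewrite -mulr_natl; apply: (IM); case: (leqP n i) => Hi.
  by rewrite -(subnK Hi) exprD mulrA; apply: (IM).
have -> : (m + n - i = n - i + m)%N by lia.
by rewrite exprD mulrAC; apply: IM.
Qed.

Lemma ideal_expr_sum (T : eqType) (s : seq T) (f : T -> R) :
  (forall i, i \in s -> exists n, I (f i ^+ n)) ->
  exists n, I ((\sum_(i <- s) f i) ^+ n).
Proof.
move=> Hs; rewrite big_seq; apply: (big_ind (fun r => exists n, I (r ^+ n))) => //.
- by exists 1%N; rewrite expr1; case: I_ideal.
- by move=> x y [m Ix] [n Iy]; exists (m + n)%N; apply: ideal_exprD.
Qed.

End Ideal.

Section GradedRing.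
Variables (G : groupType) (R : comPzRingType) (RG : G -> R -> Prop).
Hypothesis HR : graded_ring RG.

Lemma RG0 g : RG g 0. Proof. by case: HR => H _ _ _; case: (H g). Qed.

Lemma homRM a b : homR RG a -> homR RG b -> homR RG (a * b).
Proof. by case: HR => _ H _ _ [g Ha] [h Hb]; exists (g * h)%g; apply: H. Qed.

Lemma homRX a n : homR RG a -> homR RG (a ^+ n.+1).
Proof.
move=> Ha; elim: n => [|n IH]; first by rewrite expr1.
by rewrite exprS; apply: homRM.
Qed.

Lemma Gr_expr (I : R -> Prop) r : ideal I -> Gr RG I r -> exists n, I (r ^+ n).
Proof.
by move=> HI [s [f [_ _ -> Hs]]]; apply: ideal_expr_sum => // g /Hs [n [_ Hn]]; exists n.
Qed.

Lemma Gr_hom (I : R -> Prop) g a n : RG g a -> (0 < n)%N -> I (a ^+ n) -> Gr RG I a.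
Proof.
move=> Ha Hn Ian; exists [:: g], (fun h => if h == g then a else 0); split => //.
- by move=> h; case: eqP => [->|_] //; apply: RG0.
- by rewrite big_seq1 eqxx.
- by move=> h; rewrite inE => /eqP ->; rewrite eqxx; exists n.
Qed.

Lemma Gr_hom_expr (I : R -> Prop) a n : ideal I -> homR RG a ->
  Gr RG I (a ^+ n.+1) -> Gr RG I a.
Proof.
move=> HI [g Ha] /(Gr_expr HI) [k Hk].
apply: (Gr_hom (n := (n.+1 * k).+1) Ha) => //.
by rewrite exprS exprM mulrC; apply: ideal_mulr.
Qed.

Lemma bigcup_graded_ideal (F : set (set R)) :
  F `<=` graded_ideal RG -> total_on F subset -> F !=set0 ->
  graded_ideal RG (\bigcup_(X in F) X).
Proof.
move=> FG Ftot [X0 FX0].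
have chain_common x y : (\bigcup_(X in F) X) x -> (\bigcup_(X in F) X) y ->
    exists2 X, F X & X x /\ X y.
  move=> [X FX Xx] [Y FY Yy].
  case: (Ftot X Y FX FY) => [XY|YX]; first by exists Y => //; split => //; apply: XY.
  by exists X => //; split => //; apply: YX.
split; first split.
- by exists X0 => //; case: (FG X0 FX0) => [[]].
- move=> x y Hx Hy; have [X FX [Xx Xy]] := chain_common x y Hx Hy.
  by exists X => //; case: (FG X FX) => [[_ XD _] _]; apply: XD.
- move=> r x [X FX Xx]; exists X => //.
  by case: (FG X FX) => [[_ _ XM] _]; apply: XM.
- move=> r [X FX Xr]; case: (FG X FX) => _ /(_ r Xr) [s [Hs ->]].
  by exists s; split => // x /Hs [hx Xx]; split => //; exists X.
Qed.

Lemma graded_ideal_addMr (A : R -> Prop) a : graded_ideal RG A -> homR RG a ->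
  graded_ideal RG (fun x => exists y r, A y /\ x = y + r * a).
Proof.
move=> [[A0 AD AM] Ag] Ha; split; first split.
- by exists 0, 0; rewrite mul0r addr0.
- move=> _ _ [y1 [r1 [A1 ->]]] [y2 [r2 [A2 ->]]]; exists (y1 + y2), (r1 + r2).
  by split; [apply: AD | rewrite mulrDl addrACA].
- move=> t _ [y [r [Ay ->]]]; exists (t * y), (t * r).
  by split; [apply: AM | rewrite mulrDr mulrA].
- move=> _ [y [r [Ay ->]]].
  have [u [Hu ->]] := Ag y Ay.
  case: HR => _ _ Hd _; have [s [f [_ Hf ->]]] := Hd r.
  exists (u ++ [seq f g * a | g <- s]); split; last first.
    by rewrite big_cat /= big_map mulr_suml.
  move=> z; rewrite mem_cat => /orP [/Hu [hz Az]|/mapP [g _ ->]].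
    by split => //; exists z, 0; rewrite mul0r addr0.
  split; first by apply: homRM => //; exists g.
  by exists 0, (f g); rewrite add0r.
Qed.

Lemma exists_maximal_powers_avoiding (I : R -> Prop) b :
  graded_ideal RG I -> (forall k, ~ I (b ^+ k)) ->
  exists A, [/\ graded_ideal RG A, I `<=` A, (forall k, ~ A (b ^+ k)) &
    forall B, graded_ideal RG B -> (forall k, ~ B (b ^+ k)) -> A `<=` B -> B `<=` A].
Proof.
move=> HI Ib.
pose good J := [/\ graded_ideal RG J, I `<=` J & forall k, ~ J (b ^+ k)].
have goodI : good I by split.
(* [Zorn_bigcup] also needs the union of the empty chain, hence the extra point [set0]. *)
have [A [[A0|gA] Amax]] :
    exists A, (A = set0 \/ good A) /\ forall B, A `<` B -> ~ (B = set0 \/ good B).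
- apply: Zorn_bigcup => F FP Ftot.
  case: (pselect ((F `&` good) !=set0)) => [[X0 [FX0 gX0]]|noF]; last first.
    left; apply/seteqP; split => // x [X FX Xx].
    have [Xset0|gX] := FP X FX; first by rewrite Xset0 in Xx.
    by apply: noF; exists X.
  have -> : \bigcup_(X in F) X = \bigcup_(X in F `&` good) X.
    apply/seteqP; split => x [X FX Xx]; exists X => //; last by case: FX.
    by split => //; have [Xset0|] := FP X FX => //; rewrite Xset0 in Xx.
  right; split.
  + apply: bigcup_graded_ideal; last by exists X0.
      by move=> X [_ []].
    by move=> X Y [FX _] [FY _]; apply: Ftot.
  + by move=> x Ix; exists X0 => //; case: gX0 => _ IX0 _; apply: IX0.
  + by move=> k [X [_ [_ _ Xb]]]; apply: Xb.
- exfalso; apply: (Amax I); last by right.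
  rewrite A0; split => // I0; case: HI => [[HI0 _ _] _]; exact: I0 0 HI0.
case: gA => gA IA Ab; exists A; split => // B gB Bb AB.
apply: contrapT => BA; apply: (Amax B); first by split.
by right; split => // x /IA /AB.
Qed.

Lemma maximal_powers_avoiding_prime (A : R -> Prop) b :
  graded_ideal RG A -> (forall k, ~ A (b ^+ k)) ->
  (forall B, graded_ideal RG B -> (forall k, ~ B (b ^+ k)) -> A `<=` B -> B `<=` A) ->
  graded_prime_ideal RG A.
Proof.
move=> gA Ab Amax; split => //; first by move=> A1; apply: (Ab 0%N).
have [[A0 AD AM] _] := gA.
pose J a x := exists y r, A y /\ x = y + r * a.
have Jpow a : homR RG a -> ~ A a -> exists k, J a (b ^+ k).
  move=> Ha nAa; apply: contrapT => /forallNP nJ; apply: nAa.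
  apply: (Amax (J a)); first exact: graded_ideal_addMr.
  - exact: nJ.
  - by move=> x Ax; exists x, 0; rewrite mul0r addr0.
  - by exists 0, 1; rewrite add0r mul1r.
move=> a c Ha Hc Hac; apply: contrapT => /not_orP [nAa nAc].
have [k [y1 [r1 [A1 E1]]]] := Jpow a Ha nAa.
have [l [y2 [r2 [A2 E2]]]] := Jpow c Hc nAc.
apply: (Ab (k + l)%N); rewrite exprD E1 E2 mulrDl !mulrDr.
apply: (AD); first by apply: (AD); [apply: AM | rewrite mulrC; apply: AM].
apply: (AD); first by apply: AM.
by rewrite mulrACA; apply: AM.
Qed.

Lemma graded_prime_avoiding_powers (I : R -> Prop) b :
  graded_ideal RG I -> (forall k, ~ I (b ^+ k)) ->
  exists p, [/\ graded_prime_ideal RG p, I `<=` p & ~ p b].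
Proof.
move=> HI Ib; have [A [gA IA Ab Amax]] := exists_maximal_powers_avoiding HI Ib.
exists A; split => //; first exact: maximal_powers_avoiding_prime Amax.
by move=> Abb; apply: (Ab 1%N); rewrite expr1.
Qed.

End GradedRing.

Lemma colon_ideal (R : comPzRingType) (M : lmodType R) (N : M -> Prop) :
  submodule N -> ideal (colon N).
Proof.
case=> N0 ND NZ; split.
- by move=> m; rewrite scale0r.
- by move=> x y Hx Hy m; rewrite scalerDl; apply: ND.
- by move=> r x Hx m; rewrite -scalerA; apply: NZ.
Qed.

Lemma submodule_sum (R : comPzRingType) (M : lmodType R) (N : M -> Prop)
    (T : eqType) (s : seq T) (F : T -> M) :
  submodule N -> (forall i, i \in s -> N (F i)) -> N (\sum_(i <- s) F i).
Proof. by case=> N0 ND _ NF; rewrite big_seq; apply: big_ind. Qed.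

Section GradedModule.
Variables (G : groupType) (R : comPzRingType) (M : lmodType R).
Variables (RG : G -> R -> Prop) (MG : G -> M -> Prop).
Hypothesis HR : graded_ring RG.
Hypothesis HM : graded_module RG MG.

Lemma MG0 g : MG g 0. Proof. by case: HM => H _ _ _; case: (H g). Qed.

Lemma MGB g x y : MG g x -> MG g y -> MG g (x - y).
Proof. by case: HM => H _ _ _; case: (H g) => _; apply. Qed.

Lemma homMZ a m : homR RG a -> homM MG m -> homM MG (a *: m).
Proof. by case: HM => _ H _ _ [g Ha] [h Hm]; exists (g * h)%g; apply: H. Qed.

Lemma colon_hom (N : M -> Prop) r :
  submodule N -> (forall m, homM MG m -> N (r *: m)) -> colon N r.
Proof.
move=> HN Nr m; case: HM => _ _ Hd _; have [s [f [_ Hf ->]]] := Hd m.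
by rewrite scaler_sumr; apply: submodule_sum => // g _; apply: Nr; exists g.
Qed.

Lemma graded_submodule_component (N : M -> Prop) (u : seq M) :
  graded_submodule MG N -> (forall x, x \in u -> homM MG x /\ N x) ->
  forall (v : seq G) (c : G -> M), uniq v -> (forall k, MG k (c k)) ->
  \sum_(x <- u) x = \sum_(k <- v) c k -> forall k, k \in v -> N (c k).
Proof.
move=> [[N0 ND NZ] _]; elim: u => [|x u IH] Hu v c Hv Hc.
  rewrite big_nil => /esym sum0 k kv; case: HM => _ _ _ Huniq.
  by rewrite (Huniq v c Hv Hc sum0 k kv).
have [[d Hxd] Nx] := Hu x (mem_head _ _).
have {}IH := IH (fun y yu => Hu y (mem_behead (s := x :: u) yu)).
rewrite big_cons.
wlog dv : v c Hv Hc / d \in v => [Hwlog|Hsum].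
  case dv: (d \in v); first exact: Hwlog.
  pose c0 k := if k == d then 0 else c k.
  have c0v k : k \in v -> c0 k = c k by rewrite /c0; case: eqP => // ->; rewrite dv.
  move=> Hsum k kv; rewrite -c0v //; apply: (Hwlog (d :: v)); rewrite ?mem_head //.
  - by rewrite /= dv.
  - by move=> h; rewrite /c0; case: eqP => // ->; apply: MG0.
  - by rewrite big_cons {1}/c0 eqxx add0r (eq_big_seq _ c0v).
  - by rewrite inE kv orbT.
pose c' k := if k == d then c k - x else c k.
have Nc' : forall k, k \in v -> N (c' k).
  apply: IH => //; first by move=> h; rewrite /c'; case: eqP => [->|_] //; apply: MGB.
  apply: (addrI x); rewrite Hsum !(bigD1_seq d) //= /c' eqxx addrA [x + _]addrC subrK.
  by congr (_ + _); apply: eq_bigr => k /negPf ->.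
move=> k kv; have := Nc' k kv; rewrite /c'; case: eqP => [->|_] // Ncx.
by rewrite -(subrK x (c d)); apply: ND.
Qed.

Lemma colon_component (N : M -> Prop) r (s : seq G) (f : G -> R) :
  graded_submodule MG N -> colon N r -> uniq s -> (forall g, RG g (f g)) ->
  r = \sum_(g <- s) f g -> forall g, g \in s -> colon N (f g).
Proof.
move=> gN Nr Hs Hf Er g0 g0s; have [HN Ng] := gN.
apply: colon_hom => // m [h Hm].
have [u [Hu Eu]] := Ng _ (Nr m).
(* [r *: m] decomposes into the components [f g *: m] of degree [g * h]. *)
pose c k := f (k * h^-1)%g *: m.
rewrite -(mulgK h g0).
apply: (graded_submodule_component gN Hu (v := [seq (g * h)%g | g <- s]) (c := c)).
4: exact: map_f.
- by rewrite map_inj_uniq // => a b; apply: (can_inj (mulgK h)).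
- move=> k; case: HM => _ HZ _ _.
  by have := HZ _ _ _ _ (Hf (k * h^-1)%g) Hm; rewrite mulgVK.
- by rewrite -Eu Er scaler_suml big_map /c; apply: eq_bigr => g _; rewrite mulgK.
Qed.

Lemma colon_graded_ideal (N : M -> Prop) :
  graded_submodule MG N -> graded_ideal RG (colon N).
Proof.
move=> gN; split; first by apply: colon_ideal; case: gN.
move=> r Nr; case: HR => _ _ Hd _; have [s [f [Hs Hf Er]]] := Hd r.
exists [seq f g | g <- s]; split; last by rewrite big_map.
move=> _ /mapP [g gs ->]; split; first by exists g.
exact: colon_component gN Nr Hs Hf Er g gs.
Qed.

Lemma GrM_submodule (Q : M -> Prop) : submodule (GrM RG MG Q).
Proof.
have Psub P : graded_prime_submodule RG MG P -> submodule P by case=> [[]].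
split.
- by move=> P /Psub [].
- by move=> x y Qx Qy P HP QP; case: (Psub P HP) => _ PD _; apply: PD; [apply: Qx | apply: Qy].
- by move=> r x Qx P HP QP; case: (Psub P HP) => _ _ PZ; apply: PZ; apply: Qx.
Qed.

Lemma prime_colon_expr (P : M -> Prop) a n :
  graded_prime_submodule RG MG P -> homR RG a -> colon P (a ^+ n.+1) -> colon P a.
Proof.
move=> HP Ha; elim: n => [|n IH]; first by rewrite expr1.
have [[HPs _] _ Pprime] := HP.
move=> Pan; case: (pselect (colon P a)) => // nPa; apply: IH.
apply: colon_hom => // m Hm.
have := Pprime a (a ^+ n.+1 *: m) Ha (homMZ (homRX HR n Ha) Hm).
by rewrite scalerA -exprS => /(_ (Pan m)) [].
Qed.

Lemma Gr_colon_sub_colon_GrM (Q : M -> Prop) :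
  Gr RG (colon Q) `<=` colon (GrM RG MG Q).
Proof.
move=> r [s [f [_ Hf -> Hpow]]] m P HP QP.
rewrite scaler_suml; apply: submodule_sum => [|g gs]; first by case: HP => [[]].
have [[|n] [n_gt0 Qn]] := Hpow g gs => //.
by apply: (prime_colon_expr HP (ex_intro _ g (Hf g)) (n := n)) => m'; apply: QP.
Qed.

Lemma colon_GrM_sub_Gr_colon (Q : M -> Prop) :
  graded_submodule MG Q -> ~ (forall m, Q m) -> primeful RG MG Q ->
  colon (GrM RG MG Q) `<=` Gr RG (colon Q).
Proof.
move=> gQ Qproper Qprimeful r GrMr.
case: HR => _ _ Hd _; have [s [f [Hs Hf Er]]] := Hd r.
exists s, f; split => // g gs; apply: contrapT => nGr.
have avoid k : ~ colon Q (f g ^+ k).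
  case: k => [Q1|k Qk]; last by apply: nGr; exists k.+1.
  by apply: Qproper => m; rewrite -[m]scale1r; apply: Q1.
have [p [Hp Qp nfp]] := graded_prime_avoiding_powers HR (colon_graded_ideal gQ) avoid.
have [P [HP QP Pp]] := Qprimeful p Hp Qp.
apply: nfp; rewrite -Pp; have [gP _ _] := HP.
by apply: (colon_component gP _ Hs Hf Er) => // m; apply: GrMr.
Qed.

Lemma Gr_colonE (Q : M -> Prop) :
  qpSpec RG MG Q -> Gr RG (colon Q) = colon (GrM RG MG Q).
Proof.
move=> [[gQ Qproper _] Qprimeful]; apply/seteqP; split.
  exact: Gr_colon_sub_colon_GrM.
exact: colon_GrM_sub_Gr_colon.
Qed.

Lemma Gr_colon_graded_prime (Q : M -> Prop) :
  qpSpec RG MG Q -> graded_prime_ideal RG (Gr RG (colon Q)).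
Proof.
move=> HQ; have [[[HQs _] Qproper Qqp] _] := HQ.
have IQ := colon_ideal HQs.
split; first split.
- by rewrite Gr_colonE //; apply/colon_ideal/GrM_submodule.
- move=> r [s [f [_ Hf -> Hpow]]]; exists [seq f g | g <- s].
  split; last by rewrite big_map.
  move=> _ /mapP [g gs ->]; split; first by exists g.
  by have [n [n_gt0 Qn]] := Hpow g gs; apply: Gr_hom Qn.
- move=> Gr1; have [n] := Gr_expr IQ (Gr1 1).
  by rewrite expr1n => Q1; apply: Qproper => m; rewrite -[m]scale1r; apply: Q1.
move=> a b Ha Hb /(Gr_expr IQ) [n Qab].
have Qanbn : colon Q (a ^+ n.+1 * b ^+ n.+1).
  by rewrite -exprMn exprS; case: IQ => _ _; apply.
case: (pselect (Gr RG (colon Q) (a ^+ n.+1))) => [Gra|nGra].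
  by left; apply: Gr_hom_expr Gra.
right; apply: (Gr_hom_expr HR IQ Hb (n := n)); rewrite Gr_colonE //.
apply: colon_hom; first exact: GrM_submodule.
move=> m Hm; have := Qqp _ (b ^+ n.+1 *: m) (homRX HR n Ha) (homMZ (homRX HR n Hb) Hm).
by rewrite scalerA => /(_ (Qanbn m)) [].
Qed.
End GradedModule.

Section QuasiZariski.
Variables (G : groupType) (R : comPzRingType) (M : lmodType R).
Variables (RG : G -> R -> Prop) (MG : G -> M -> Prop).

Lemma qpV_eqP (Q P : M -> Prop) : qpSpec RG MG Q -> qpSpec RG MG P ->
  qpV RG MG Q = qpV RG MG P <-> Gr RG (colon Q) = Gr RG (colon P).
Proof.
move=> HQ HP; split => [EV|EGr]; last by rewrite /qpV EGr.
have VV X Y : qpSpec RG MG Y -> qpV RG MG X = qpV RG MG Y ->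
    Gr RG (colon X) `<=` Gr RG (colon Y).
  by move=> HY EXY; have [] : qpV RG MG X Y by rewrite EXY; split.
by apply/seteqP; split; [apply: VV EV | apply: VV (esym EV)].
Qed.

Lemma qz_T0P : qz_T0 RG MG <-> forall Q P, qpSpec RG MG Q -> qpSpec RG MG P ->
  Gr RG (colon Q) = Gr RG (colon P) -> Q = P.
Proof.
split => [T0 Q P HQ HP EGr | inj Q P HQ HP neQP].
  apply: contrapT => neQP; have [_ [[K [_ ->]] sep]] := T0 Q P HQ HP neQP.
  have VQP : qpV RG MG K Q <-> qpV RG MG K P.
    by rewrite /qpV EGr; split => -[_ KP].
  by case: sep => [[[_ nVQ] nUP] | [[_ nVP] nUQ]];
    [apply: nUP; split => // /VQP | apply: nUQ; split => // /VQP].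
(* Witness: the complement of [qp-V(Y)]. *)
have sep X Y : qpSpec RG MG X -> qpSpec RG MG Y ->
    ~ (Gr RG (colon Y) `<=` Gr RG (colon X)) ->
    exists U, qz_open RG MG U /\ U X /\ ~ U Y.
  move=> HX HY nYX; have [[gY _ _] _] := HY.
  exists (fun Z => qpSpec RG MG Z /\ ~ qpV RG MG Y Z); split; first by exists Y.
  by split; [split => // -[] | case=> _; apply; split].
have [PQ|nPQ] := pselect (Gr RG (colon P) `<=` Gr RG (colon Q)); last first.
  by have [U [oU UQ]] := sep Q P HQ HP nPQ; exists U; split => //; left.
have [QP|nQP] := pselect (Gr RG (colon Q) `<=` Gr RG (colon P)).
  by case: neQP; apply: inj => //; apply/seteqP.
by have [U [oU UP]] := sep P Q HP HQ nQP; exists U; split => //; right.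
Qed.

Lemma phi_eqP (Rbar : comPzRingType) (pi : {additive R -> Rbar})
    (pi_ker : forall r, pi r = 0 -> Ann M r) (Q P : M -> Prop) :
  phi RG MG pi Q = phi RG MG pi P <->
  colon (GrM RG MG Q) = colon (GrM RG MG P).
Proof.
split => [Ephi|EGrM]; last by rewrite /phi EGrM.
(* [phi X] determines [(Gr_M(X) :_R M)] because the latter contains [Ann(M)]. *)
have sub X Y : phi RG MG pi X = phi RG MG pi Y ->
    colon (GrM RG MG X) `<=` colon (GrM RG MG Y).
  move=> EXY r Xr; have : phi RG MG pi Y (pi r) by rewrite -EXY; exists r.
  case=> r' [Yr' pir']; have [Y0 YD _] := colon_ideal (GrM_submodule RG MG Y).
  rewrite -(subrK r' r); apply: YD => // m.
  by rewrite pi_ker ?raddfB ?pir' ?subrr //; case: (GrM_submodule RG MG Y).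
by apply/seteqP; split; apply: sub.
Qed.

End QuasiZariski.

Unset Implicit Arguments.
Set Strict Implicit.

Theorem theorem4p3 (G : groupType) (R : comPzRingType) (M : lmodType R)
  (RG : G -> R -> Prop) (MG : G -> M -> Prop)
  (HR : graded_ring RG) (HM : graded_module RG MG)
  (Rbar : comPzRingType) (pi : {rmorphism R -> Rbar})
  (pi_surj : forall y : Rbar, exists r : R, pi r = y)
  (pi_ker : forall r : R, pi r = 0 <-> Ann M r) :
  [<-> qz_T0 RG MG;
       forall Q P, qpSpec RG MG Q -> qpSpec RG MG P ->
         qpV RG MG Q = qpV RG MG P -> Q = P;
       forall p, graded_prime_ideal RG p ->
         forall Q1 Q2, qpSpec_p RG MG p Q1 -> qpSpec_p RG MG p Q2 -> Q1 = Q2;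
       forall Q P, qpSpec RG MG Q -> qpSpec RG MG P ->
         phi RG MG pi Q = phi RG MG pi P -> Q = P].
Proof.
pose inj := forall Q P, qpSpec RG MG Q -> qpSpec RG MG P ->
  Gr RG (colon Q) = Gr RG (colon P) -> Q = P.
have T0_inj : qz_T0 RG MG <-> inj := qz_T0P RG MG.
have V_inj : (forall Q P, qpSpec RG MG Q -> qpSpec RG MG P ->
    qpV RG MG Q = qpV RG MG P -> Q = P) <-> inj.
  by split=> inj' Q P HQ HP /(qpV_eqP HQ HP); apply: inj'.
have Spec_p_inj : (forall p, graded_prime_ideal RG p ->
    forall Q1 Q2, qpSpec_p RG MG p Q1 -> qpSpec_p RG MG p Q2 -> Q1 = Q2) <-> inj.
  split=> [inj' Q P HQ HP EGr | inj' p _ Q1 Q2 [HQ1 E1] [HQ2 E2]].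
    exact: inj' (Gr_colon_graded_prime HR HM HQ) Q P (conj HQ erefl) (conj HP (esym EGr)).
  by apply: inj' => //; rewrite E1 E2.
have phi_inj : (forall Q P, qpSpec RG MG Q -> qpSpec RG MG P ->
    phi RG MG pi Q = phi RG MG pi P -> Q = P) <-> inj.
  have phiP Q P := phi_eqP RG MG (fun r => (pi_ker r).1) Q P.
  split=> inj' Q P HQ HP; have EQ := Gr_colonE HR HM HQ; have EP := Gr_colonE HR HM HP.
    by move=> EGr; apply: inj' => //; apply/phiP; rewrite -EQ -EP.
  by move/phiP; rewrite -EQ -EP; apply: inj'.
tfae.
- by move/T0_inj/V_inj.
- by move/V_inj/Spec_p_inj.
- by move/Spec_p_inj/phi_inj.
- by move/phi_inj/T0_inj.
Qed.
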